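(* Consider formal expressions built from two variables $\pi_i,\pi_j$ and real constants using only the binary operators $+,-,\times,\div$ (with parentheses allowed freely), and let the operator count of an expression be the number of occurrences of these operators in it. Each expression defines a function $f(\pi_i,\pi_j)$ wherever it is defined. Say that $f$ is admissible if: (1) $f$ is defined on all of $\mathbb{R}^+\times\mathbb{R}^+$ (where $\mathbb{R}^+=(0,\infty)$) and takes values in $[0,1]$; (2) $f(\pi_i,\pi_j)=\tfrac12$ whenever $\pi_i=\pi_j$; (3) $\lim_{\pi_i\to 0} f(\pi_i,\pi_j)=0$ for each fixed $\pi_j$; (4) $\lim_{\pi_j\to 0} f(\pi_i,\pi_j)=1$ for each fixed $\pi_i$; (5) $\lim_{\pi_i\to \infty} f(\pi_i,\pi_j)=1$ for each fixed $\pi_j$; (6) $\lim_{\pi_j\to \infty} f(\pi_i,\pi_j)=0$ for each fixed $\pi_i$. Then no expression with operator count $0$ or $1$ defines an admissible function, and every expression with operator count exactly $2$ that defines an admissible function defines $f(\pi_i,\pi_j)=\dfrac{\pi_i}{\pi_i+\pi_j}$ (which is admissible). Thus $\pi_i/(\pi_i+\pi_j)$ is the unique admissible function of minimal operator count.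
   Context: Here $\pi_i,\pi_j>0$ are strength parameters of items $i$ and $j$, and $f(\pi_i,\pi_j)$ is intended as the probability that $i$ is preferred to $j$ in a pairwise comparison. Constants may appear in place of variables at no cost in the operator count; parentheses do not count as operators. *)

From Stdlib Require Import Reals.
From Coquelicot Require Import Coquelicot.
Open Scope R_scope.

Inductive bexpr : Type :=
  | VarI : bexpr
  | VarJ : bexpr
  | Const : R -> bexpr
  | Add : bexpr -> bexpr -> bexpr
  | Sub : bexpr -> bexpr -> bexpr
  | Mul : bexpr -> bexpr -> bexpr
  | Dvd : bexpr -> bexpr -> bexpr.

Fixpoint opcount (e : bexpr) : nat :=
  match e with
  | VarI | VarJ | Const _ => 0
  | Add a b | Sub a b | Mul a b | Dvd a b => S (opcount a + opcount b)
  end.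

Fixpoint eval (e : bexpr) (x y : R) : option R :=
  match e with
  | VarI => Some x
  | VarJ => Some y
  | Const c => Some c
  | Add a b => match eval a x y, eval b x y with
               | Some u, Some v => Some (u + v) | _, _ => None end
  | Sub a b => match eval a x y, eval b x y with
               | Some u, Some v => Some (u - v) | _, _ => None end
  | Mul a b => match eval a x y, eval b x y with
               | Some u, Some v => Some (u * v) | _, _ => None end
  | Dvd a b => match eval a x y, eval b x y with
               | Some u, Some v => if Req_EM_T v 0 then None else Some (u / v)
               | _, _ => None end
  end.

(** Total version used for limits; only ever inspected on the positive
    quadrant, where admissibility forces the expression to be defined. *)
Definition evalR (e : bexpr) (x y : R) : R :=
  match eval e x y with Some v => v | None => 0 end.

Definition admissible (e : bexpr) : Prop :=
  (forall x y, 0 < x -> 0 < y ->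
     exists v, eval e x y = Some v /\ 0 <= v <= 1) /\
  (forall x, 0 < x -> eval e x x = Some (1/2)) /\
  (forall y, 0 < y -> filterlim (fun x => evalR e x y) (at_right 0) (locally 0)) /\
  (forall x, 0 < x -> filterlim (fun y => evalR e x y) (at_right 0) (locally 1)) /\
  (forall y, 0 < y -> filterlim (fun x => evalR e x y) (Rbar_locally p_infty) (locally 1)) /\
  (forall x, 0 < x -> filterlim (fun y => evalR e x y) (Rbar_locally p_infty) (locally 0)).

Definition bt_expr : bexpr := Dvd VarI (Add VarI VarJ).

From Stdlib Require Import Reals Lra Lia Psatz.
From Coquelicot Require Import Coquelicot.
Open Scope R_scope.

(* An admissible f satisfies six sample constraints: f(p,p) = 1/2 for p = 1, 2, 3,
   f(3,1) and f(1,3) lie in [0,1], and f(t,1) < 1/4 for some t in (0,1) by the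
   limit (3).  Expressions with at most two operators come in finitely many shapes
   (up to the values of their constants); for each shape the sample constraints form
   a small system of polynomial (in)equalities in the constants once denominators
   are cleared, and it is inconsistent unless the expression is pi_i / (pi_i + pi_j)
   or pi_i / (pi_j + pi_i). *)

Lemma filterlim_at_right_0_near (f : R -> R) (l eps : R) : 0 < eps ->
  filterlim f (at_right 0) (locally l) -> exists t, 0 < t < 1 /\ Rabs (f t - l) < eps.
Proof.
  intros Heps Hf.
  assert (Hnear := proj1 (filterlim_locally f l) Hf (mkposreal eps Heps)).
  assert (Hlt1 : at_right 0 (fun u => u < 1)).
  { exists (mkposreal 1 Rlt_0_1); intros u Hu _.
    apply Rabs_def2 in Hu; unfold minus, plus, opp in Hu; simpl in Hu; lra. }
  assert (Hpos : at_right 0 (fun u => 0 < u)) by (exists (mkposreal 1 Rlt_0_1); auto).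
  destruct (filter_ex _ (filter_and _ _ (filter_and _ _ Hnear Hlt1) Hpos)) as (t & (Ht & Ht1) & Ht0).
  exists t; split; [lra | exact Ht].
Qed.

Definition admissible_samples (e : bexpr) (t : R) : Prop :=
  eval e 1 1 = Some (1/2) /\ eval e 2 2 = Some (1/2) /\ eval e 3 3 = Some (1/2) /\
  (exists v, eval e 3 1 = Some v /\ 0 <= v <= 1) /\
  (exists v, eval e 1 3 = Some v /\ 0 <= v <= 1) /\
  (exists v, eval e t 1 = Some v /\ v < 1/4).

Lemma admissible_samples_of_admissible (e : bexpr) :
  admissible e -> exists t, 0 < t < 1 /\ admissible_samples e t.
Proof.
  intros (Hrange & Hdiag & Hlim0 & _).
  destruct (filterlim_at_right_0_near _ 0 (1/4) ltac:(lra) (Hlim0 1 Rlt_0_1))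
    as (t & Ht & Hsmall).
  destruct (Hrange t 1) as (v & Hv & _); [lra | lra |].
  exists t; split; [exact Ht|].
  repeat split; try (apply Hdiag; lra).
  - apply Hrange; lra.
  - apply Hrange; lra.
  - exists v; split; [exact Hv|].
    unfold evalR in Hsmall; rewrite Hv in Hsmall; apply Rabs_def2 in Hsmall; lra.
Qed.

Ltac expand_shapes Hc :=
  repeat match goal with
  | e : bexpr |- _ => destruct e; simpl in Hc; try lia
  end.

Ltac destruct_evals :=
  repeat match goal with
  | H : context [Req_EM_T ?a ?b] |- _ => destruct (Req_EM_T a b)
  | H : None = Some _ |- _ => discriminate H
  | H : Some _ = Some _ |- _ => injection H; clear H; intro
  | H : exists _, _ |- _ => destruct H
  | H : _ /\ _ |- _ => destruct H
  end.

Ltac is_numeral t := match t with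
  | IZR _ => idtac | R0 => idtac | R1 => idtac
  | ?a + ?b => is_numeral a; is_numeral b
  | ?a * ?b => is_numeral a; is_numeral b
  | ?a - ?b => is_numeral a; is_numeral b
  | / ?a => is_numeral a
  end.

(* Each non-numeral denominator [t] becomes a fresh unknown [i] with [t * i = 1],
   so that the sample constraints turn into polynomial ones. *)
Ltac name_inverses :=
  unfold Rdiv in *;
  repeat match goal with
  | H : ?a * ?b <> 0 |- _ => apply Rmult_neq_0_reg in H; destruct H
  end;
  repeat rewrite ?Rinv_mult, ?Rinv_inv in *;
  repeat match goal with
  | H : ?t <> 0 |- _ =>
      tryif is_numeral t then first [ exfalso; apply H; ring | clear H ] else
      match goal with
      | H' : context [/ t] |- _ =>
        let i := fresh "i" in
        let Hi := fresh "Hi" in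
        assert (Hi : t * / t = 1) by (field; exact H);
        set (i := / t) in *; clearbody i
      end
  end.

Lemma Rmult_Rinv_cancel_r (n v : R) : n <> 0 -> n * v * / n = v.
Proof. intros; field; assumption. Qed.

Ltac simplify_numerals :=
  repeat rewrite ?Rinv_1, ?Rmult_1_l, ?Rmult_1_r in *;
  repeat match goal with
  | H : context [?n * ?v * / ?n] |- _ => rewrite (Rmult_Rinv_cancel_r n v) in H by lra
  end;
  repeat match goal with
  | H : ?v = ?c |- _ => is_var v; is_numeral c; subst v
  | H : ?c = ?v |- _ => is_var v; is_numeral c; subst v
  end.

Ltac clear_denominators :=
  repeat match goal with
  | Hi : ?t * ?i = 1, H : ?a * ?i = ?b |- _ =>
      let H' := fresh "E" in
      assert (H' : a = b * t)
        by (transitivity (a * (t * i)); [rewrite Hi; ring | rewrite <- H; ring]);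
      clear H
  end.

Ltac refute_samples :=
  destruct_evals; name_inverses; simplify_numerals;
  first [ lra | nra | clear_denominators; nra ].

Lemma samples_opcount_le1 (e : bexpr) (t : R) :
  (opcount e <= 1)%nat -> ~ admissible_samples e t.
Proof.
  intros Hc HF; unfold admissible_samples in HF.
  expand_shapes Hc; simpl in HF; refute_samples.
Qed.

Lemma samples_opcount2_bt_shape (e : bexpr) (t : R) :
  opcount e = 2%nat -> 0 < t < 1 -> admissible_samples e t ->
  e = Dvd VarI (Add VarI VarJ) \/ e = Dvd VarI (Add VarJ VarI).
Proof.
  intros Hc Ht HF; unfold admissible_samples in HF.
  expand_shapes Hc; simpl in HF;
  first [ left; reflexivity | right; reflexivity | exfalso; refute_samples ].
Qed.

Lemma eval_bt_expr (x y : R) : x + y <> 0 -> eval bt_expr x y = Some (x / (x + y)).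
Proof. intros Hxy; simpl; destruct (Req_EM_T (x + y) 0); [contradiction | reflexivity]. Qed.

Lemma evalR_bt_expr (x y : R) : 0 < x -> 0 < y -> evalR bt_expr x y = x / (x + y).
Proof. intros; unfold evalR; rewrite eval_bt_expr; [reflexivity | lra]. Qed.

Lemma filterlim_at_right_of_is_lim (f g : R -> R) (l : R) :
  (forall u, 0 < u -> f u = g u) -> is_lim g 0 l -> filterlim f (at_right 0) (locally l).
Proof.
  intros Hfg Hg.
  apply filterlim_ext_loc with g.
  - exists (mkposreal 1 Rlt_0_1); intros u _ Hu; symmetry; exact (Hfg u Hu).
  - apply (filterlim_filter_le_1 (F := Rbar_locally' 0)); [|exact Hg].
    intros P [d Hd]; exists d; intros u Hu Hpos; apply Hd; [exact Hu | lra].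
Qed.

Lemma filterlim_p_infty_of_is_lim (f g : R -> R) (l : R) :
  (forall u, 0 < u -> f u = g u) -> is_lim g p_infty l ->
  filterlim f (Rbar_locally p_infty) (locally l).
Proof.
  intros Hfg Hg.
  apply filterlim_ext_loc with g; [|exact Hg].
  exists 0; intros u Hu; symmetry; exact (Hfg u Hu).
Qed.

Lemma is_lim_continuity_eq (g : R -> R) (a l : R) :
  continuity_pt g a -> g a = l -> is_lim g a l.
Proof. intros Hg <-; exact (is_lim_continuity g a Hg). Qed.

Lemma is_lim_p_infty_scal_inv_shift (a c : R) : is_lim (fun u => a * / (u + c)) p_infty 0.
Proof.
  replace (Finite 0) with (Rbar_mult a 0) by (simpl; f_equal; ring).
  apply is_lim_scal_l, (is_lim_inv (fun u => u + c) p_infty p_infty); [|discriminate].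
  eapply is_lim_plus; [apply is_lim_id | apply is_lim_const | reflexivity].
Qed.

Lemma bt_expr_admissible : admissible bt_expr.
Proof.
  repeat split.
  - intros x y Hx Hy; exists (x / (x + y)); split; [apply eval_bt_expr; lra|].
    split; [apply Rdiv_le_0_compat; lra|].
    apply (Rdiv_le_1 x (x + y)); lra.
  - intros x Hx; rewrite eval_bt_expr by lra; f_equal; field; lra.
  - intros y Hy; apply (filterlim_at_right_of_is_lim _ (fun u => u / (u + y))).
    + intros; apply evalR_bt_expr; lra.
    + apply is_lim_continuity_eq; [reg; lra | field; lra].
  - intros x Hx; apply (filterlim_at_right_of_is_lim _ (fun u => x / (x + u))).
    + intros; apply evalR_bt_expr; lra.
    + apply is_lim_continuity_eq; [reg; lra | field; lra].
  - intros y Hy; apply (filterlim_p_infty_of_is_lim _ (fun u => 1 - y * / (u + y))).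
    + intros u Hu; rewrite evalR_bt_expr by lra; field; lra.
    + replace (Finite 1) with (Finite (1 - 0)) by (f_equal; ring).
      apply is_lim_minus'; [apply is_lim_const | apply is_lim_p_infty_scal_inv_shift].
  - intros x Hx; apply (filterlim_p_infty_of_is_lim _ (fun u => x * / (u + x))).
    + intros u Hu; rewrite evalR_bt_expr by lra; unfold Rdiv; rewrite Rplus_comm; reflexivity.
    + apply is_lim_p_infty_scal_inv_shift.
Qed.

Theorem mainTheorem1 :
  (forall e : bexpr, (opcount e <= 1)%nat -> ~ admissible e) /\
  (forall e : bexpr, opcount e = 2%nat -> admissible e ->
     forall x y, 0 < x -> 0 < y -> eval e x y = Some (x / (x + y))) /\
  opcount bt_expr = 2%nat /\ admissible bt_expr.
Proof.
  split; [|split; [|split]].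
  - intros e Hc Ha.
    destruct (admissible_samples_of_admissible e Ha) as (t & _ & HF).
    exact (samples_opcount_le1 e t Hc HF).
  - intros e Hc Ha x y Hx Hy.
    destruct (admissible_samples_of_admissible e Ha) as (t & Ht & HF).
    destruct (samples_opcount2_bt_shape e t Hc Ht HF) as [-> | ->].
    + apply eval_bt_expr; lra.
    + simpl; destruct (Req_EM_T (y + x) 0); [lra | rewrite Rplus_comm; reflexivity].
  - reflexivity.
  - exact bt_expr_admissible.
Qed.
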